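(* Let $q\geqslant 3$ be a prime power and $s\in\mathbb{Z}_{\geqslant 1}$. Then the non-fixed c-Wieferich primes in $\mathbb{F}_q[T]$ of degree $s$ are precisely the monic irreducible factors over $\mathbb{F}_q$ of the polynomials $R_{q,s,\alpha}=\prod_{i=1}^s(T^q-T-\alpha^{q^i})$ for $\alpha\in B_{q,s,0}$.
   Context: Carlitz module: for $N\in\mathbb{F}_q[T]$, $\rho_N(X)$ is the additive polynomial determined by requiring $N\mapsto\rho_N$ to be an $\mathbb{F}_q$-algebra homomorphism from $\mathbb{F}_q[T]$ to the ring of additive polynomials (multiplication = composition) with $\rho_T(X)=X^q+TX$. A monic irreducible $\mathcal{P}\in\mathbb{F}_q[T]$ is a c-Wieferich prime if $\rho_{\mathcal{P}-1}(1)\equiv0\pmod{\mathcal{P}^2}$ (known to be equivalent to $F_{\deg\mathcal{P}-1}\equiv0\pmod{\mathcal{P}}$), where $F_0=1$, $F_i=(-1)^i+(T^{q^i}-T)F_{i-1}$. A polynomial $f\in\mathbb{F}_q[T]$ is non-fixed if $f(T+a)=f(T)$ holds only for $a=0\in\mathbb{F}_q$. $B_{q,s,0}$ is the set of equivalence classes (under $\theta_1\sim\theta_2$ iff $\theta_1^{q^i}=\theta_2$ for some $i\geqslant0$) of elements $\alpha\in\mathbb{F}_{q^s}$ of degree $s$ over $\mathbb{F}_q$ with $\mathrm{Tr}_{\mathbb{F}_{q^s}/\mathbb{F}_q}(\alpha)=0$ and $F_{s-1}\equiv0\pmod{T^q-T-\alpha}$ in $\mathbb{F}_{q^s}[T]$.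 *)

From HB Require Import structures.
From mathcomp Require Import all_boot all_order all_algebra all_field.
Set Implicit Arguments. Unset Strict Implicit. Unset Printing Implicit Defensive.
Import GRing.Theory.
Local Open Scope ring_scope.

(* Since N |-> rho_N is the
   F_q-algebra homomorphism into additive polynomials under composition,
   evaluating rho_N at x is exactly this sum of iterates. *)
Definition carlitzT (F : finFieldType) (x : {poly F}) : {poly F} :=
  x ^+ #|F| + 'X * x.

Definition carlitz (F : finFieldType) (N x : {poly F}) : {poly F} :=
  \sum_(i < size N) N`_i *: iter i (@carlitzT F) x.

Definition c_wieferich (F : finFieldType) (P : {poly F}) : Prop :=
  [/\ P \is monic, irreducible_poly P & P ^+ 2 %| carlitz (P - 1) 1].

Definition non_fixed (F : finFieldType) (P : {poly F}) : Prop :=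
  forall a : F, P \Po ('X + a%:P) = P -> a = 0.

Fixpoint Fseq (R : comNzRingType) (q i : nat) : {poly R} :=
  match i with
  | 0 => 1
  | i'.+1 => (-1) ^+ i'.+1 + ('X ^+ (q ^ i'.+1) - 'X) * Fseq R q i'
  end.

Definition trace_q (L : fieldType) (q s : nat) (alpha : L) : L :=
  \sum_(i < s) alpha ^+ (q ^ i).

Definition Rpoly (L : fieldType) (q s : nat) (alpha : L) : {poly L} :=
  \prod_(1 <= i < s.+1) ('X ^+ q - 'X - (alpha ^+ (q ^ i))%:P).

From HB Require Import structures.
From mathcomp Require Import all_boot all_order all_algebra all_field ring.
(* Write [rho_N(1)] as the sum of the Carlitz coefficients [a_j(N)], which satisfy
   [(T^(q^(j+1)) - T) a_(j+1) = a_j^q - a_j].  If the monic [P] of degree [d] is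
   coprime to every [T^(q^k) - T] with [0 < k < d], these relations show inductively
   that [P] divides every [a_j(P - 1)], [0 < j < d], and that
   [rho_(P-1)(1) / P * prod_(k < d-1) (T^(q^(k+1)) - T) = F_(d-1)] modulo [P];
   hence [P] is c-Wieferich iff [P | F_(d-1)].
   Let [y] be a root of [P] in [L = F_(q^s)] and [alpha = y^q - y].  As [F_i] is
   invariant under [T |-> T + c], [c \in F_q], and the roots of [T^q - T - alpha]
   are the [y + c], [P | F_(s-1)] iff [T^q - T - alpha | F_(s-1)].  If [alpha] had
   degree [e < s], then [y^(q^e) - y] would lie in [F_q] and a translation would fix
   [P]; conversely a translation fixing [P] maps [y] to some conjugate [y^(q^j)], and
   then [alpha^(q^j) = alpha].  The translates [P(T - c)] multiply to
   [R_(q,s,alpha)], and [alpha] has trace 0.  Conversely, by the additive Hilbert 90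
   every factor of [R_(q,s,alpha)] splits in [L], so [P] has a root [y] with
   [y^q - y = alpha], and [alpha \in F_q(y)] forces [deg P = s]. *)

Set Implicit Arguments.
Unset Strict Implicit.
Unset Printing Implicit Defensive.
Import GRing.Theory.
Local Open Scope ring_scope.

Lemma exprBn_pchar (R : comNzRingType) (x y : R) n :
  [pchar R].-nat n -> (x - y) ^+ n = x ^+ n - y ^+ n.
Proof. by move=> hn; rewrite exprDn_pchar // exprNn_pchar. Qed.

Lemma expr_sum_pchar (R : comNzRingType) n : [pchar R].-nat n ->
  forall I (r : seq I) (P : pred I) (G : I -> R),
  (\sum_(i <- r | P i) G i) ^+ n = \sum_(i <- r | P i) G i ^+ n.
Proof.
move=> hn I r P G; elim/big_rec2: _ => [|i a b _ <-]; last exact: exprDn_pchar.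
by case/andP: hn => n_gt0 _; rewrite expr0n gtn_eqF.
Qed.

Lemma big_ord_shift R (idx : R) (op : Monoid.com_law idx) n (g : nat -> R) :
  g n = g 0 -> \big[op/idx]_(i < n) g i.+1 = \big[op/idx]_(i < n) g i.
Proof.
case: n => [|n] gn0; first by rewrite !big_ord0.
by rewrite big_ord_recr [RHS]big_ord_recl /= gn0 Monoid.mulmC.
Qed.

Lemma size_XnsubX (R : nzRingType) n :
  (1 < n)%N -> size ('X^n - 'X : {poly R}) = n.+1.
Proof.
by move=> n_gt1; rewrite size_polyDl ?size_polyXn // size_polyN size_polyX ltnS.
Qed.

Lemma root_dvdp_prod_XsubC (R : idomainType) I (r : seq I) (G : I -> R)
    (p : {poly R}) :
  (1 < size p)%N -> p %| \prod_(i <- r) ('X - (G i)%:P) -> exists i, root p (G i).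
Proof.
move=> p_gt1 /dvdp_prod_XsubC[m]; case: (mask m r) => [|i r'] p_eqp.
  by move: p_gt1; rewrite (eqp_size p_eqp) big_nil size_poly1.
by exists i; rewrite (eqp_root p_eqp) big_cons rootM root_XsubC eqxx.
Qed.

Lemma size_polyB_lead_coef (R : nzRingType) (p r : {poly R}) :
  p != 0 -> size r = size p -> lead_coef r = lead_coef p ->
  (size (r - p)%R < size p)%N.
Proof.
move=> p_neq0 size_rp lead_rp.
have size_p_gt0 : (0 < size p)%N by rewrite size_poly_gt0.
rewrite -(prednK size_p_gt0) ltnS.
apply/leq_sizeP => i; rewrite leq_eqVlt coefB => /orP[/eqP <- | lt_i].
  by move: lead_rp; rewrite /lead_coef size_rp => ->; rewrite subrr.
by rewrite !nth_default ?subrr // ?size_rp -(prednK size_p_gt0).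
Qed.

Lemma map_Fseq (R S : comNzRingType) (f : {rmorphism R -> S}) q i :
  map_poly f (Fseq R q i) = Fseq S q i.
Proof.
elim: i => [|i IHi] /=; first by rewrite rmorph1.
rewrite rmorphD rmorphM rmorphB /= map_polyXn map_polyX IHi.
by rewrite rmorphXn rmorphN rmorph1.
Qed.

Section CardPowers.
Variable F : finFieldType.
Local Notation q := #|F|.

Lemma card_exp_gt0 k : (0 < q ^ k)%N.
Proof. by rewrite expn_gt0 (ltn_trans _ (finNzRing_gt1 F)). Qed.

Lemma expf_card_exp (k : nat) (c : F) : c ^+ (q ^ k) = c.
Proof. by elim: k => [|k IHk]; rewrite ?expr1 // expnSr exprM IHk expf_card. Qed.

Lemma pnat_card_exp (R : nzRingType) : [pchar R] =i [pchar F] ->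
  forall k : nat, [pchar R].-nat (q ^ k)%N.
Proof.
move=> pcharR k; have [p _ pcharFp] := finPcharP F.
rewrite (card_pprimeChar pcharFp) -expnM pnatX (eq_pnat _ pcharR).
by rewrite (eq_pnat _ (pcharf_eq pcharFp)) pnat_id ?orbT // (pcharf_prime pcharFp).
Qed.

Lemma pnat_card (R : nzRingType) : [pchar R] =i [pchar F] -> [pchar R].-nat q.
Proof. by move=> pcharR; rewrite -(expn1 q) pnat_card_exp. Qed.

End CardPowers.

Section CarlitzCoefficients.
Variable F : finFieldType.
Local Notation q := #|F|.
Let pnat_q : [pchar {poly F}].-nat q := pnat_card (pchar_poly F).

(* [rhoT_coef i j] is the coefficient of [x ^+ (q ^ j)] in [rho_(T^i)(x)]. *)
Fixpoint rhoT_coef (i j : nat) : {poly F} :=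
  match i with
  | 0 => (j == 0)%:R
  | i'.+1 => 'X * rhoT_coef i' j + (if j is j'.+1 then rhoT_coef i' j' ^+ q else 0)
  end.

Lemma rhoT_coef_gt i j : (i < j)%N -> rhoT_coef i j = 0.
Proof.
elim: i j => [|i IHi] [|j] //= ij.
by rewrite !IHi ?mulr0 ?add0r ?expr0n ?(ltnW ij) // gtn_eqF // ltnW // finNzRing_gt1.
Qed.

Lemma rhoT_coef_diag i : rhoT_coef i i = 1.
Proof. by elim: i => //= i IHi; rewrite rhoT_coef_gt // mulr0 add0r IHi expr1n. Qed.

Lemma rhoT_coef0 i : rhoT_coef i 0 = 'X^i.
Proof. by elim: i => //= i IHi; rewrite addr0 IHi exprS. Qed.

Lemma iter_carlitzT1 i m : (i < m)%N ->
  iter i (@carlitzT F) 1 = \sum_(j < m) rhoT_coef i j.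
Proof.
move=> lt_im; have -> : \sum_(j < m) rhoT_coef i j = \sum_(j < i.+1) rhoT_coef i j.
  elim: m lt_im => // m IHm; rewrite ltnS leq_eqVlt => /orP[/eqP <- //|lt_im].
  by rewrite big_ord_recr /= rhoT_coef_gt // addr0 IHm.
elim: i {lt_im} => [|i IHi]; first by rewrite big_ord1.
rewrite iterS IHi /carlitzT (expr_sum_pchar pnat_q) mulr_sumr.
rewrite [in RHS]big_ord_recr /= rhoT_coef_gt // mulr0 add0r rhoT_coef_diag expr1n.
rewrite big_split /= -addrA [LHS]addrC; congr (_ + _).
rewrite [X in _ = X + _]big_ord_recl /= add0r [LHS]big_ord_recr /= rhoT_coef_diag.
by rewrite expr1n.
Qed.

Lemma rhoT_coefSl i j : rhoT_coef i.+1 j =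
  'X * rhoT_coef i j + (if j is j'.+1 then rhoT_coef i j' ^+ q else 0).
Proof. by []. Qed.

(* [rhoT_coefSl] expresses [rho_(T^(i+1)) = rho_T \o rho_(T^i)], and
   [rhoT_coefSr] expresses [rho_(T^(i+1)) = rho_(T^i) \o rho_T]. *)
Lemma rhoT_coefSr i j : rhoT_coef i.+1 j =
  'X^(q ^ j) * rhoT_coef i j + (if j is j'.+1 then rhoT_coef i j' else 0).
Proof.
elim: i j => [|i IHi] [|j].
- by rewrite expn0 expr1 /= !addr0.
- rewrite /= !mulr0 !add0r.
  by case: (j == 0); rewrite ?expr1n ?expr0n ?gtn_eqF ?(ltnW (finNzRing_gt1 F)).
- by rewrite !rhoT_coef0 expn0 expr1 addr0 -exprS.
rewrite rhoT_coefSl [in RHS]rhoT_coefSl [in RHS](rhoT_coefSl i j) !IHi.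
case: j => [|j].
  rewrite !addr0 !expn0 !expr1 expn1 exprMn.
  move: (rhoT_coef i 1) (rhoT_coef i 0) => a b; ring.
rewrite (exprDn_pchar _ _ pnat_q) !exprMn -exprM -expnSr.
move: (rhoT_coef i j.+2) (rhoT_coef i j.+1) (rhoT_coef i j) ('X^(q ^ j.+2)) => a b c Y.
ring.
Qed.

Lemma rhoT_coef_rec i j :
  ('X^(q ^ j.+1) - 'X) * rhoT_coef i j.+1 = rhoT_coef i j ^+ q - rhoT_coef i j.
Proof.
have /eqP := rhoT_coefSr i j.+1; rewrite rhoT_coefSl -subr_eq0 => /eqP e.
rewrite -[RHS]subr0 -e.
move: (rhoT_coef i j.+1) (rhoT_coef i j) ('X^(q ^ j.+1)) => a b Y; ring.
Qed.

Definition rho_coef (N : {poly F}) j := \sum_(i < size N) N`_i *: rhoT_coef i j.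

Lemma carlitz1E N : carlitz N 1 = \sum_(j < size N) rho_coef N j.
Proof.
rewrite /carlitz /rho_coef (exchange_big_dep xpredT) //=; apply: eq_bigr => i _.
by rewrite (@iter_carlitzT1 _ _ (ltn_ord i)) scaler_sumr.
Qed.

Lemma rho_coef_rec N j :
  ('X^(q ^ j.+1) - 'X) * rho_coef N j.+1 = rho_coef N j ^+ q - rho_coef N j.
Proof.
rewrite /rho_coef mulr_sumr (expr_sum_pchar pnat_q) -sumrB.
apply: eq_bigr => i _; rewrite -scalerAr rhoT_coef_rec scalerBr.
by rewrite -!mul_polyC exprMn -polyC_exp expf_card.
Qed.

Lemma rho_coef0 N : rho_coef N 0 = N.
Proof.
rewrite /rho_coef -[RHS]coefK poly_def; apply: eq_bigr => i _.
by rewrite rhoT_coef0.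
Qed.

Lemma rho_coef_last N : rho_coef N (size N).-1 = (lead_coef N)%:P.
Proof.
rewrite /rho_coef /lead_coef; case sizeN: (size N) => [|n].
  by move/eqP: sizeN; rewrite size_poly_eq0 big_ord0 => /eqP ->; rewrite coef0.
rewrite big_ord_recr /= rhoT_coef_diag alg_polyC big1 ?add0r // => i _.
by rewrite rhoT_coef_gt ?scaler0.
Qed.

End CarlitzCoefficients.

Section WieferichCriterion.
Variable F : finFieldType.
Local Notation q := #|F|.
Let pnat_q : [pchar {poly F}].-nat q := pnat_card (pchar_poly F).

Definition Lprod j : {poly F} := \prod_(k < j) ('X^(q ^ k.+1) - 'X).

Lemma LprodS j : Lprod j.+1 = Lprod j * ('X^(q ^ j.+1) - 'X).
Proof. by rewrite /Lprod big_ord_recr. Qed.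

Variables (n : nat) (P : {poly F}).
Hypothesis monicP : P \is monic.
Hypothesis sizeP : size P = n.+2.
Hypothesis coprimeP : forall k, (0 < k <= n)%N -> coprimep P ('X^(q ^ k) - 'X).

Let P_neq0 : P != 0. Proof. exact: monic_neq0. Qed.

(* The coefficients of [rho_(P-1)(1)], except that the top one, [1], is moved
   into the constant one, [P - 1]. *)
Let u j := if j is 0 then P else rho_coef (P - 1) j.
Let b j := u j %/ P.

Let u_rec j : ('X^(q ^ j.+1) - 'X) * u j.+1 = u j ^+ q - u j.
Proof.
rewrite /u rho_coef_rec; case: j => [|j] //.
by rewrite rho_coef0 (exprBn_pchar _ _ pnat_q) expr1n opprB addrA subrK.
Qed.

Let carlitz_Pm1 : carlitz (P - 1) 1 = \sum_(j < n.+1) u j.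
Proof.
have size_Pm1 : size (P - 1) = n.+2.
  by rewrite size_polyDl // size_polyN size_polyC oner_neq0 sizeP.
have lead_Pm1 : lead_coef (P - 1) = 1.
  by rewrite lead_coefDl ?(eqP monicP) // size_polyN size_polyC oner_neq0 sizeP.
rewrite carlitz1E size_Pm1 big_ord_recr /=.
have -> : rho_coef (P - 1) n.+1 = 1.
  by rewrite -[n.+1]/(n.+2).-1 -size_Pm1 rho_coef_last lead_Pm1.
rewrite big_ord_recl [RHS]big_ord_recl /= rho_coef0.
by move: (\sum_(i < n) _) => S; ring.
Qed.

Let dvdp_u j : (j <= n)%N -> P %| u j.
Proof.
elim: j => [|j IHj] le_jn; first exact: dvdpp.
have P_dvd_uj := IHj (ltnW le_jn).
rewrite -(Gauss_dvdpl _ (@coprimeP j.+1 le_jn)) mulrC u_rec.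
by rewrite dvdp_sub // -(prednK (ltnW (finNzRing_gt1 F))) exprS dvdp_mulr.
Qed.

Let b_rec j : (j < n)%N ->
  ('X^(q ^ j.+1) - 'X) * b j.+1 = b j ^+ q * P ^+ q.-1 - b j.
Proof.
move=> lt_jn; apply: (mulIf P_neq0).
rewrite -mulrA !divpK ?dvdp_u // ?(ltnW lt_jn) // u_rec.
rewrite -{1 2}(divpK (dvdp_u (ltnW lt_jn))) -/(b j) exprMn.
rewrite -{2}(prednK (ltnW (finNzRing_gt1 F))) exprS.
by move: (b j ^+ q) (P ^+ q.-1) (b j) => x y z; ring.
Qed.

Let b_Lprod j : (j <= n)%N -> P %| b j * Lprod j - (-1) ^+ j.
Proof.
elim: j => [|j IHj] le_jn.
  by rewrite /b /= divpp // /Lprod big_ord0 mulr1 subrr dvdp0.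
have -> : b j.+1 * Lprod j.+1 - (-1) ^+ j.+1 =
    Lprod j * (b j ^+ q * P ^+ q.-1) - (b j * Lprod j - (-1) ^+ j).
  rewrite LprodS mulrCA [b j.+1 * _]mulrC b_rec // exprS.
  by move: (b j) (Lprod j) (b j ^+ q * P ^+ q.-1) ((-1) ^+ j) => x y z w; ring.
rewrite dvdp_sub ?IHj ?(ltnW le_jn) // dvdp_mull // dvdp_mull // dvdp_exp //.
by rewrite -ltnS prednK ?finNzRing_gt1 // ltnW // finNzRing_gt1.
Qed.

Let sum_b_Lprod j : (j <= n)%N ->
  P %| (\sum_(k < j.+1) b k) * Lprod j - Fseq F q j.
Proof.
elim: j => [|j IHj] le_jn.
  by rewrite big_ord1 /Lprod big_ord0 mulr1 /b divpp // subrr dvdp0.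
have -> : (\sum_(k < j.+2) b k) * Lprod j.+1 - Fseq F q j.+1 =
    ('X^(q ^ j.+1) - 'X) * ((\sum_(k < j.+1) b k) * Lprod j - Fseq F q j) +
    (b j.+1 * Lprod j.+1 - (-1) ^+ j.+1).
  rewrite big_ord_recr LprodS /=.
  move: (\sum_(k < j.+1) b k) (b j.+1) (Lprod j) (Fseq F q j) ((-1) ^+ j.+1).
  by move: ('X^(q ^ j.+1) - 'X) => D x y z v t; ring.
by rewrite dvdp_add ?dvdp_mull ?IHj ?b_Lprod // ltnW.
Qed.

Let coprimep_Lprod j : (j <= n)%N -> coprimep P (Lprod j).
Proof.
elim: j => [|j IHj] le_jn; first by rewrite /Lprod big_ord0 coprimep1.
by rewrite LprodS coprimepMr IHj ?(ltnW le_jn) // (@coprimeP j.+1).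
Qed.

Lemma wieferich_crit : (P ^+ 2 %| carlitz (P - 1) 1) = (P %| Fseq F q n).
Proof.
have -> : carlitz (P - 1) 1 = P * \sum_(k < n.+1) b k.
  rewrite carlitz_Pm1 mulr_sumr; apply: eq_bigr => k _.
  by rewrite mulrC divpK // dvdp_u // -ltnS.
rewrite expr2 dvdp_mul2l // -(Gauss_dvdpl _ (coprimep_Lprod (leqnn n))).
by rewrite -[_ * Lprod n](subrK (Fseq F q n)) dvdp_addr ?sum_b_Lprod.
Qed.

End WieferichCriterion.

(* Names containing [artin_schreier] refer to the map [y |-> y ^+ q - y]. *)
Section FiniteFieldExtension.
Variables (F : finFieldType) (L : fieldExtType F).
Local Notation q := #|F|.
Local Notation "p ^L" := (map_poly (in_alg L) p) (at level 2, format "p ^L").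
Let pnatL k : [pchar L].-nat (q ^ k)%N := pnat_card_exp (pchar_lalg L) k.
Let pnatLq : [pchar L].-nat q := pnat_card (pchar_lalg L).

Lemma frob_inj k : injective (fun x : L => x ^+ (q ^ k)).
Proof.
move=> x y /eqP; rewrite -subr_eq0 -(exprBn_pchar _ _ (pnatL k)).
by rewrite expf_eq0 card_exp_gt0 subr_eq0 => /eqP.
Qed.

Lemma frob_scalar k (c : F) : (c%:A : L) ^+ (q ^ k) = c%:A.
Proof. by rewrite -in_algE -rmorphXn expf_card_exp. Qed.

Lemma expq_scalar (c : F) : (c%:A : L) ^+ q = c%:A.
Proof. by rewrite -in_algE -rmorphXn expf_card. Qed.

Lemma horner_frob k (g : {poly F}) (x : L) :
  g^L.[x] ^+ (q ^ k) = g^L.[x ^+ (q ^ k)].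
Proof.
rewrite !horner_coef (expr_sum_pchar (pnatL k)) size_map_poly.
apply: eq_bigr => i _.
by rewrite exprMn coef_map /= frob_scalar -!exprM mulnC.
Qed.

Lemma frob_artin_schreier k (y : L) :
  (y ^+ q - y) ^+ (q ^ k) = (y ^+ (q ^ k)) ^+ q - y ^+ (q ^ k).
Proof. by rewrite (exprBn_pchar _ _ (pnatL k)) -!exprM mulnC. Qed.

Lemma artin_schreierB (u v : L) :
  (u - v) ^+ q - (u - v) = (u ^+ q - u) - (v ^+ q - v).
Proof. by rewrite (exprBn_pchar _ _ pnatLq); move: (u ^+ q) (v ^+ q) => a b; ring. Qed.

Lemma artin_schreier_addA (y : L) (c : F) :
  (y + c%:A) ^+ q - (y + c%:A) = y ^+ q - y.
Proof.
rewrite (exprDn_pchar _ _ pnatLq) expq_scalar.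
by rewrite opprD addrACA subrr addr0.
Qed.

Lemma root_comp_XaddC (g : {poly F}) (x : L) (c : F) :
  root (g \Po ('X + c%:P))^L x = root g^L (x + c%:A).
Proof.
by rewrite /root map_comp_poly rmorphD /= map_polyX map_polyC /= horner_comp !hornerE.
Qed.

Lemma root_frob k (g : {poly F}) (x : L) :
  root g^L x -> root g^L (x ^+ (q ^ k)).
Proof.
by rewrite /root -horner_frob => /eqP->; rewrite expr0n gtn_eqF ?card_exp_gt0.
Qed.

Lemma mem1v_frob (x : L) : (x \in 1%VS) = (x ^+ q == x).
Proof. by rewrite (Fermat's_little_theorem 1%AS) /= dimv1 expn1. Qed.

Lemma frob_adjoin_degree (x : L) : x ^+ (q ^ adjoin_degree 1%VS x) = x.
Proof.
have := Fermat's_little_theorem <<1; x>>%AS x.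
by rewrite memv_adjoin /= dim_Fadjoin dimv1 muln1 => /esym/eqP.
Qed.

(* [F(x)] has [q ^ adjoin_degree 1 x] elements, all fixed by [z |-> z ^+ (q ^ j)]
   if [x] is, hence too many roots for ['X^(q ^ j) - 'X]. *)
Lemma frob_neq (x : L) j : (0 < j < adjoin_degree 1%VS x)%N -> x ^+ (q ^ j) != x.
Proof.
case/andP=> j_gt0 lt_j_deg; apply/eqP => fix_x.
pose K : {vspace finvect_type L} := <<1; x>>%VS.
have q_gt1 := finNzRing_gt1 F.
have qj_gt1 : (1 < q ^ j)%N by rewrite -(expn0 q) ltn_exp2l.
have p_neq0 : ('X^(q ^ j) - 'X : {poly L}) != 0.
  by rewrite -size_poly_gt0 size_XnsubX.
have rootsK : all (root ('X^(q ^ j) - 'X)) (enum K).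
  apply/allP => y; rewrite mem_enum => /Fadjoin1_polyP[g ->].
  by rewrite /root !hornerE horner_frob fix_x subrr.
have := max_poly_roots p_neq0 rootsK (enum_uniq _).
have cardK : size (enum K) = #|K| by exact: esym (cardE _).
rewrite size_XnsubX // cardK card_vspace dim_Fadjoin dimv1 muln1 ltnS leqNgt.
by rewrite ltn_exp2l ?lt_j_deg.
Qed.

Lemma adjoin_degree_artin_schreier (y : L) :
  (adjoin_degree 1%VS (y ^+ q - y) <= adjoin_degree 1%VS y)%N.
Proof.
have y_in : y ^+ q - y \in <<1; y>>%VS by rewrite rpredB ?rpredX ?memv_adjoin.
have /dimvS := introT FadjoinP (conj (sub1v <<1; y>>%AS) y_in).
by rewrite /= !dim_Fadjoin dimv1 !muln1.
Qed.

Lemma dvdp_common_root (P g : {poly F}) (x : L) :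
  irreducible_poly P -> root P^L x -> root g^L x -> P %| g.
Proof.
move=> irrP rootPx; apply: contraTT; rewrite -(irreducible_poly_coprime _ irrP).
by rewrite -(coprimep_map (in_alg L)) => /coprimep_root/(_ rootPx).
Qed.

Lemma adjoin_degree_root (P : {poly F}) (x : L) :
  irreducible_poly P -> root P^L x -> adjoin_degree 1%VS x = (size P).-1.
Proof.
move=> irrP rootPx; have [m m_minPoly] := polyOver1P (minPolyOver 1%AS x).
have m_neq0 : m != 0.
  apply: contraTneq (monic_minPoly 1%AS x) => m_eq0.
  by rewrite m_minPoly m_eq0 map_poly0 monicE lead_coef0 eq_sym oner_eq0.
have P_neq0 : P != 0 by rewrite -size_poly_gt0 ltnW //; case: irrP.
have le_m_P : (size m <= size P)%N.
  rewrite -(size_map_poly (in_alg L) m) -(size_map_poly (in_alg L) P) -m_minPoly.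
  by apply: dvdp_leq; rewrite ?map_poly_eq0 ?minPoly_dvdp ?alg_polyOver.
have le_P_m : (size P <= size m)%N.
  apply: dvdp_leq => //; apply: (dvdp_common_root irrP rootPx).
  by rewrite -m_minPoly root_minPoly.
have -> : size P = size m by apply/eqP; rewrite eqn_leq le_P_m le_m_P.
by rewrite -(size_map_poly (in_alg L)) -m_minPoly size_minPoly.
Qed.

Lemma uniq_shifts (y : L) : uniq [seq y + c%:A | c <- enum F].
Proof.
rewrite map_inj_uniq ?enum_uniq // => a b /addrI.
by rewrite -!in_algE; apply: fmorph_inj.
Qed.

Lemma artin_schreier_split (y : L) :
  'X^q - 'X - (y ^+ q - y)%:P =
  \prod_(r <- [seq y + c%:A | c <- enum F]) ('X - r%:P).
Proof.
have q_gt1 := finNzRing_gt1 F.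
have size_low : size (- 'X - (y ^+ q - y)%:P) = 2.
  by rewrite -opprD size_polyN size_XaddC.
rewrite [LHS](@all_roots_prod_XsubC _ _ [seq y + c%:A | c <- enum F]).
- by rewrite -addrA lead_coefDl ?lead_coefXn ?scale1r // size_low size_polyXn ltnS.
- by rewrite size_map -cardE -addrA size_polyDl ?size_polyXn // size_low ltnS.
- apply/allP => _ /mapP[c _ ->].
  by rewrite /root !hornerE artin_schreier_addA subrr.
by rewrite uniq_rootsE uniq_shifts.
Qed.

Lemma horner_Fseq_shift i (x : L) (c : F) :
  (Fseq L q i).[x + c%:A] = (Fseq L q i).[x].
Proof.
elim: i => [|i IHi] /=; first by rewrite !hornerE.
rewrite !hornerE IHi (exprDn_pchar _ _ (pnatL i.+1)) frob_scalar.
congr (_ + _ * _).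
by rewrite opprD addrACA subrr addr0.
Qed.

Lemma dvdp_Fseq_artin_schreier i (y : L) :
  ('X^q - 'X - (y ^+ q - y)%:P %| Fseq L q i) = root (Fseq L q i) y.
Proof.
apply/idP/idP => [|root_y].
  by move/root_dvdp; apply; rewrite /root !hornerE subrr.
rewrite artin_schreier_split uniq_roots_dvdp ?uniq_rootsE ?uniq_shifts //.
by apply/allP => _ /mapP[c _ ->]; rewrite /root horner_Fseq_shift.
Qed.

Lemma map_poly_frob_roots (P : {poly F}) (x : L) :
  P \is monic -> irreducible_poly P -> root P^L x ->
  P^L = \prod_(j < (size P).-1) ('X - (x ^+ (q ^ j))%:P).
Proof.
move=> monicP irrP rootPx; set d := (size P).-1.
have deg_x : adjoin_degree 1%VS x = d := adjoin_degree_root irrP rootPx.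
have frob_neq_lt i j : (i < j < d)%N -> x ^+ (q ^ i) != x ^+ (q ^ j).
  case/andP=> lt_ij lt_jd; have : x ^+ (q ^ (j - i)) != x.
    by apply: frob_neq; rewrite subn_gt0 lt_ij deg_x (leq_ltn_trans (leq_subr _ _)).
  apply: contra => /eqP eq_ij; apply/eqP/(@frob_inj i).
  by rewrite /= -exprM -expnD subnK ?eq_ij // ltnW.
rewrite -(big_mkord xpredT (fun j => 'X - (x ^+ (q ^ j))%:P)) /index_iota subn0.
rewrite -(big_map (fun j => x ^+ (q ^ j)) xpredT (fun r => 'X - r%:P)).
rewrite [LHS](@all_roots_prod_XsubC _ _ [seq x ^+ (q ^ j) | j <- iota 0 d]).
- by rewrite lead_coef_map (eqP monicP) /= !scale1r.
- by rewrite size_map size_iota size_map_poly /d prednK // ltnW //; case: irrP.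
- by apply/allP => _ /mapP[j _ ->]; apply: root_frob.
rewrite uniq_rootsE map_inj_in_uniq ?iota_uniq // => i j.
rewrite !mem_iota !add0n => lt_id lt_jd eq_ij; apply/eqP; apply: contraT => ne_ij.
case: (ltngtP i j) ne_ij => // [lt_ij | lt_ji] _.
  by move: (frob_neq_lt i j); rewrite lt_ij lt_jd eq_ij eqxx => /(_ isT).
by move: (frob_neq_lt j i); rewrite lt_ji lt_id eq_ij eqxx => /(_ isT).
Qed.

Lemma comp_XaddC_eq (P : {poly F}) (y : L) (c : F) :
  P \is monic -> irreducible_poly P -> root P^L y -> root P^L (y + c%:A) ->
  P \Po ('X + c%:P) = P.
Proof.
move=> monicP irrP rootPy rootPyc; apply/eqP; rewrite -subr_eq0; apply/eqP.
set Q := _ - P; have P_neq0 : P != 0 := monic_neq0 monicP.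
have size_comp : size (P \Po ('X + c%:P)) = size P.
  by rewrite size_comp_poly2 ?size_XaddC.
have lt_Q_P : (size Q < size P)%N.
  rewrite size_polyB_lead_coef // lead_coef_comp ?size_XaddC //.
  by rewrite lead_coefXaddC expr1n mulr1.
apply: contraTeq lt_Q_P => Q_neq0; rewrite -leqNgt dvdp_leq //.
apply: (dvdp_common_root irrP rootPy).
have : root (P \Po ('X + c%:P))^L y by rewrite root_comp_XaddC.
by rewrite /root /Q rmorphB hornerD hornerN => /eqP->; rewrite (rootP rootPy) subr0.
Qed.

End FiniteFieldExtension.

Section IrreducibleRoot.
Variables (F : finFieldType) (L : fieldExtType F).
Local Notation q := #|F|.
Local Notation "p ^L" := (map_poly (in_alg L) p) (at level 2, format "p ^L").

Variables (P : {poly F}) (y : L).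
Hypotheses (monicP : P \is monic) (irrP : irreducible_poly P) (rootPy : root P^L y).
Let deg_y : adjoin_degree 1%VS y = (size P).-1 := adjoin_degree_root irrP rootPy.

Lemma wieferich_root : (P ^+ 2 %| carlitz (P - 1) 1) = (P %| Fseq F q (size P).-2).
Proof.
have [n sizeP] : exists n, size P = n.+2.
  by case: irrP; case: (size P) => [|[|n]] // _ _; exists n.
rewrite sizeP; apply: wieferich_crit => // k /andP[k_gt0 le_kn].
rewrite (irreducible_poly_coprime _ irrP); apply/negP => P_dvd.
have : root ('X^(q ^ k) - 'X)^L y by rewrite (root_dvdp _ rootPy) ?dvdp_map.
rewrite /root rmorphB rmorphXn /= map_polyX !hornerE subr_eq0; apply/negP.
by apply: frob_neq; rewrite k_gt0 deg_y sizeP.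
Qed.

Lemma dvdp_Fseq_root i :
  (P %| Fseq F q i) = ('X^q - 'X - (y ^+ q - y)%:P %| Fseq L q i).
Proof.
rewrite dvdp_Fseq_artin_schreier -(map_Fseq (in_alg L)).
apply/idP/idP => [P_dvd | /(dvdp_common_root irrP rootPy)//].
by rewrite (root_dvdp _ rootPy) ?dvdp_map.
Qed.

Lemma adjoin_degree_artin_schreier_root :
  non_fixed P -> adjoin_degree 1%VS (y ^+ q - y) = (size P).-1.
Proof.
move=> nfP; apply/eqP; rewrite -deg_y eqn_leq adjoin_degree_artin_schreier leqNgt.
apply/negP => lt_e_y; set e := adjoin_degree 1%VS _ in lt_e_y.
have /vlineP[c def_c] : y ^+ (q ^ e) - y \in 1%VS.
  rewrite mem1v_frob -subr_eq0 artin_schreierB -frob_artin_schreier.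
  by rewrite frob_adjoin_degree subrr.
have frob_y : y ^+ (q ^ e) = y + c%:A by rewrite -def_c addrC subrK.
have c_eq0 : c = 0.
  by apply/nfP/(comp_XaddC_eq monicP irrP rootPy); rewrite -frob_y root_frob.
have : y ^+ (q ^ e) != y by rewrite frob_neq // lt_e_y /adjoin_degree.
by rewrite frob_y c_eq0 scale0r addr0 eqxx.
Qed.

Lemma non_fixed_adjoin_degree :
  adjoin_degree 1%VS (y ^+ q - y) = (size P).-1 -> non_fixed P.
Proof.
move=> deg_a b Pb; apply/eqP/contraT => b_neq0.
have : root P^L (y + b%:A) by rewrite -root_comp_XaddC Pb.
rewrite (map_poly_frob_roots monicP irrP rootPy) /root horner_prod.
case/prodf_eq0 => j _; rewrite !hornerE subr_eq0 => /eqP frob_y.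
have j_gt0 : (0 < j)%N.
  rewrite lt0n; apply: contra b_neq0 => /eqP j_eq0; move: frob_y.
  rewrite j_eq0 expn0 expr1 -{2}[y]addr0 => /addrI/eqP.
  by rewrite -in_algE fmorph_eq0.
have : (y ^+ q - y) ^+ (q ^ j) != y ^+ q - y by rewrite frob_neq // j_gt0 deg_a ltn_ord.
by rewrite frob_artin_schreier -frob_y artin_schreier_addA eqxx.
Qed.

Lemma non_fixed_root :
  non_fixed P <-> adjoin_degree 1%VS (y ^+ q - y) = (size P).-1.
Proof.
by split; [exact: adjoin_degree_artin_schreier_root | exact: non_fixed_adjoin_degree].
Qed.

Lemma map_prod_comp_XsubC :
  (\prod_(c : F) (P \Po ('X - c%:P)))^L = Rpoly q (size P).-1 (y ^+ q - y).
Proof.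
rewrite rmorph_prod /=.
under eq_bigr => c _ do rewrite map_comp_poly rmorphB /= map_polyX map_polyC /=
  (map_poly_frob_roots monicP irrP rootPy) rmorph_prod.
rewrite exchange_big /Rpoly big_add1 /= big_mkord.
pose g i := 'X^q - 'X - ((y ^+ q - y) ^+ (q ^ i))%:P.
rewrite (@big_ord_shift _ _ _ _ g); last first.
  by rewrite /g -deg_y frob_artin_schreier frob_adjoin_degree.
apply: eq_bigr => j _; rewrite /g frob_artin_schreier artin_schreier_split.
rewrite big_map big_enum /=; apply: eq_bigr => c _.
by rewrite comp_polyB comp_polyX comp_polyC polyCD opprD addrA addrAC.
Qed.

End IrreducibleRoot.

Section FullExtension.
Variables (F : finFieldType) (L : fieldExtType F) (s : nat).
Local Notation q := #|F|.
Local Notation "p ^L" := (map_poly (in_alg L) p) (at level 2, format "p ^L").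
Local Notation Tr := (trace_q q s).
Hypothesis dimL : \dim {:L} = s.
Let pnatLq : [pchar L].-nat q := pnat_card (pchar_lalg L).

Let s_gt0 : (0 < s)%N. Proof. by rewrite -dimL (adim_gt0 (aspacef L)). Qed.

Lemma card_finvect : #|finvect_type L| = (q ^ s)%N.
Proof.
rewrite -dimL -(@card_vspacef F (finvect_type L) (Vector.class (finvect_type L))).
exact: card_vspace.
Qed.

Lemma frob_dim (x : L) : x ^+ (q ^ s) = x.
Proof. by have := expf_card (x : finvect_type L); rewrite card_finvect. Qed.

Lemma adjoin_degree_le (x : L) : (adjoin_degree 1%VS x <= s)%N.
Proof. by have := dimvS (subvf <<1; x>>%VS); rewrite dim_Fadjoin dimv1 muln1 dimL. Qed.

Lemma irreducible_exists_root (P : {poly F}) :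
  P \is monic -> irreducible_poly P -> size P = s.+1 -> exists x : L, root P^L x.
Proof.
move=> monicP irrP sizeP; pose mi : monic_irreducible_poly P := (irrP, monicP).
have P_dvd : P %| 'X^(q ^ s) - 'X.
  have X_qs : in_qpoly P ('X^(q ^ s) - 'X) = 0 :> {poly %/ P with mi}.
    rewrite rmorphB rmorphXn /=.
    have := expf_card (in_qpoly P 'X : {poly %/ P with mi}).
    by rewrite card_qfpoly sizeP /= => ->; rewrite subrr.
  rewrite dvdpE /Pdiv.Ring.rdvdp -(mk_monicE mi).
  by move/(congr1 val): X_qs => /= ->.
have : P^L %| \prod_(r <- enum (finvect_type L)) ('X - r%:P).
  have := finField_genPoly (finvect_type L); rewrite card_finvect big_enum /= => <-.
  by rewrite -(dvdp_map (in_alg L)) rmorphB rmorphXn /= map_polyX in P_dvd.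
case/root_dvdp_prod_XsubC => [|r root_r]; last by exists r.
by rewrite size_map_poly sizeP ltnS.
Qed.

Lemma trace_artin_schreier (y : L) : Tr (y ^+ q - y) = 0.
Proof.
rewrite /trace_q; under eq_bigr do rewrite frob_artin_schreier -exprM -expnSr.
rewrite sumrB (@big_ord_shift _ _ _ _ (fun i => y ^+ (q ^ i))) ?subrr //.
by rewrite frob_dim expn0 expr1.
Qed.

Lemma expq_trace (u : L) : Tr u ^+ q = Tr u.
Proof.
rewrite /trace_q (expr_sum_pchar pnatLq).
under eq_bigr do rewrite -exprM -expnSr.
by rewrite (@big_ord_shift _ _ _ _ (fun i => u ^+ (q ^ i))) // frob_dim expn0 expr1.
Qed.

Lemma trace_frob k (u : L) : Tr (u ^+ (q ^ k)) = Tr u ^+ (q ^ k).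
Proof.
rewrite /trace_q (expr_sum_pchar (pnat_card_exp (pchar_lalg L) k)).
by apply: eq_bigr => j _; rewrite -!exprM mulnC.
Qed.

(* The trace is a polynomial function of degree [q ^ (s - 1) < #|L|]. *)
Lemma trace_neq0 : exists u : L, Tr u != 0.
Proof.
have [s' def_s] : exists s', s = s'.+1 by exists s.-1; rewrite (prednK s_gt0).
pose trp : {poly L} := \sum_(i < s) 'X^(q ^ i).
have size_trp : size trp = (q ^ s').+1.
  rewrite /trp def_s big_ord_recr /= addrC size_polyDl size_polyXn // ltnS.
  apply: (big_ind (fun p : {poly L} => size p <= q ^ s')%N) => [|p r|i _].
  - by rewrite size_poly0.
  - by move=> le_p le_r; rewrite (leq_trans (size_polyD _ _)) // geq_max le_p le_r.
  - by rewrite size_polyXn ltn_exp2l ?finNzRing_gt1.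
have trp_neq0 : trp != 0 by rewrite -size_poly_gt0 size_trp.
case: (pickP (fun u : finvect_type L => Tr u != 0)) => [u trace_u | trace0].
  by exists u.
have roots_trp : all (root trp) (enum (finvect_type L)).
  apply/allP => u _; rewrite /root /trp horner_sum.
  by under eq_bigr do rewrite hornerXn; apply: negbFE (trace0 u).
have size_enum : size (enum (finvect_type L)) = (q ^ s)%N.
  by rewrite -cardE card_finvect.
have := max_poly_roots trp_neq0 roots_trp (enum_uniq _).
by rewrite size_enum size_trp def_s ltnS leqNgt ltn_exp2l ?finNzRing_gt1 ?ltnSn.
Qed.

(* With [u] of nonzero trace, [t = - (sum_(i < s) S_i u^(q^i)) / Tr u] where
   [S_i = sum_(j < i) b^(q^j)]. *)
Lemma additive_hilbert90 (b : L) : Tr b = 0 -> exists t : L, t ^+ q - t = b.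
Proof.
move=> trace_b; have [u trace_u] := trace_neq0.
pose S i := \sum_(j < i) b ^+ (q ^ j).
have S_rec i : S i ^+ q = S i.+1 - b.
  rewrite /S big_ord_recl expn0 expr1 [b + _]addrC addrK (expr_sum_pchar pnatLq).
  by apply: eq_bigr => j _; rewrite -exprM -expnSr.
pose th := \sum_(i < s) S i * u ^+ (q ^ i).
have th_rec : th ^+ q - th = - (b * Tr u).
  rewrite (expr_sum_pchar pnatLq).
  under eq_bigr do rewrite exprMn S_rec -exprM -expnSr mulrBl.
  rewrite sumrB -mulr_sumr (@big_ord_shift _ _ _ _ (fun i => S i * u ^+ (q ^ i))).
    rewrite (@big_ord_shift _ _ _ _ (fun i => u ^+ (q ^ i))) ?frob_dim ?expn0 ?expr1 //.
    by rewrite -/th -/(Tr u); ring.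
  by rewrite [S s]trace_b /S big_ord0 !mul0r.
exists (- th / Tr u).
rewrite exprMn exprVn expq_trace (exprNn_pchar _ pnatLq).
have -> : - th ^+ q / Tr u - - th / Tr u = - (th ^+ q - th) / Tr u by ring.
by rewrite th_rec; field.
Qed.

(* [R_(q,s,a)] splits over [L] by Hilbert 90, so [P] has a root [r] with
   [r ^+ q - r = a ^+ (q ^ i)]; the conjugate [r ^+ (q ^ (s - i))] has image [a]. *)
Lemma exists_root_artin_schreier (P R0 : {poly F}) (a : L) :
  irreducible_poly P -> Tr a = 0 -> R0^L = Rpoly q s a -> P %| R0 ->
  exists2 y, root P^L y & y ^+ q - y = a.
Proof.
move=> irrP trace_a R0E P_dvd.
have /fin_all_exists[th thE] i : exists t : L, t ^+ q - t = a ^+ (q ^ (i : 'I_s).+1).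
  by apply: additive_hilbert90; rewrite trace_frob trace_a expr0n gtn_eqF ?card_exp_gt0.
have : P^L %| \prod_(ic : 'I_s * F) ('X - (th ic.1 + ic.2%:A)%:P).
  rewrite -(dvdp_map (in_alg L)) R0E /Rpoly big_add1 /= big_mkord in P_dvd.
  rewrite -(pair_bigA _ (fun i c => 'X - (th i + c%:A)%:P)) /=.
  under eq_bigr => i _ do rewrite -big_enum
    -(big_map (fun c => th i + c%:A) xpredT (fun r => 'X - r%:P))
    -artin_schreier_split thE.
  exact: P_dvd.
case/root_dvdp_prod_XsubC => [|[i c] /= root_ic].
  by rewrite size_map_poly; case: irrP.
exists ((th i + c%:A) ^+ (q ^ (s - i.+1))); first exact: root_frob.
by rewrite -frob_artin_schreier artin_schreier_addA thE -exprM -expnD subnKC ?frob_dim.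
Qed.

Lemma size_root_artin_schreier (P : {poly F}) (y : L) :
  irreducible_poly P -> root P^L y -> adjoin_degree 1%VS (y ^+ q - y) = s ->
  size P = s.+1.
Proof.
move=> irrP rootPy deg_a; have deg_y := adjoin_degree_root irrP rootPy.
have le_sy := adjoin_degree_artin_schreier y; rewrite deg_a deg_y in le_sy.
have := adjoin_degree_le y; rewrite deg_y => le_ys.
have <- : (size P).-1 = s by apply/eqP; rewrite eqn_leq le_ys le_sy.
by rewrite prednK // ltnW //; case: irrP.
Qed.

End FullExtension.

Theorem theorem3p4 (F : finFieldType) (L : fieldExtType F) (s : nat)
  (hq : (3 <= #|F|)%N) (hs : (1 <= s)%N) (hL : \dim {:L} = s)
  (P : {poly F}) :
  (c_wieferich P /\ non_fixed P /\ size P = s.+1) <->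
  ([/\ P \is monic, irreducible_poly P &
    exists alpha : L,
      [/\ adjoin_degree 1%VS alpha = s,
          trace_q #|F| s alpha = 0,
          ('X ^+ #|F| - 'X - alpha%:P) %| Fseq L #|F| s.-1 &
          exists R0 : {poly F},
            map_poly (in_alg L) R0 = Rpoly #|F| s alpha /\ P %| R0]]).
Proof.
split=> [[[monicP irrP wieferichP] [non_fixedP sizeP]] | [monicP irrP]].
  have [y rootPy] := irreducible_exists_root hL monicP irrP sizeP.
  split=> //; exists (y ^+ #|F| - y); split.
  - by rewrite (non_fixed_root monicP irrP rootPy).1 ?sizeP.
  - exact: trace_artin_schreier.
  - rewrite -(dvdp_Fseq_root irrP rootPy) -[s.-1]/(s.+1).-2 -sizeP.
    by rewrite -(wieferich_root monicP irrP rootPy).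
  exists (\prod_(c : F) (P \Po ('X - c%:P))); split.
    by rewrite (map_prod_comp_XsubC monicP irrP rootPy) sizeP.
  by rewrite (bigD1 0) //= subr0 comp_polyXr dvdp_mulr.
case=> a [deg_a trace_a dvd_a [R0 [R0E P_dvd]]].
have [y rootPy def_a] := exists_root_artin_schreier hL irrP trace_a R0E P_dvd.
rewrite -def_a in deg_a dvd_a.
have sizeP := size_root_artin_schreier hL irrP rootPy deg_a.
split; [split=> // | split=> //].
  by rewrite (wieferich_root monicP irrP rootPy) sizeP (dvdp_Fseq_root irrP rootPy).
by apply/(non_fixed_root monicP irrP rootPy); rewrite deg_a sizeP.
Qed.
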